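(* Let $n > 1$. The class of $\mathrm{FP}_n$-injective left $R$-modules is closed under extensions, under direct products, under direct limits, and under pure submodules and pure quotients (i.e. if $0 \to N \to M \to M/N \to 0$ is a pure exact sequence with $M$ $\mathrm{FP}_n$-injective, then $N$ and $M/N$ are $\mathrm{FP}_n$-injective).
   Context: $R$ is an associative ring with unit. For $n \ge 0$, a (left or right) $R$-module is finitely $n$-presented if there is an exact sequence $F_n \to \cdots \to F_0 \to M \to 0$ with every $F_i$ finitely generated free; $\mathrm{FP}_n$ is the class of such modules. A left $R$-module $N$ is $\mathrm{FP}_n$-injective if $\mathrm{Ext}^1_R(F,N)=0$ for every left $R$-module $F \in \mathrm{FP}_n$. *)

(* left R-modules are [lmodType R] for [R : pzRingType]
   (associative ring with unit, possibly noncommutative). *)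
From HB Require Import structures.
From mathcomp Require Import all_boot all_order all_algebra.
Set Implicit Arguments. Unset Strict Implicit. Unset Printing Implicit Defensive.
Import GRing.Theory.
Local Open Scope ring_scope.

Section ModDefs.
Variable R : pzRingType.

Definition exact_at (A B C : lmodType R) (f : A -> B) (g : B -> C) : Prop :=
  forall y : B, g y = 0 <-> exists x : A, f x = y.

Definition short_exact (A B C : lmodType R)
    (f : {linear A -> B}) (g : {linear B -> C}) : Prop :=
  injective f /\ exact_at f g /\ (forall z : C, exists y : B, g y = z).

(* M is finitely n-presented: there is an exact sequence
   F_n --d_(n-1)--> ... --d_0--> F_0 --e--> M --> 0
   with F_i = R^(k i) finitely generated free (row vectors 'rV[R]_(k i)). *)
Definition FPn (n : nat) (M : lmodType R) : Prop :=
  exists (k : nat -> nat)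
         (d : forall i : nat, {linear 'rV[R]_(k i.+1) -> 'rV[R]_(k i)})
         (e : {linear 'rV[R]_(k 0%N) -> M}),
    (forall z : M, exists y, e y = z) /\
    ((0 < n)%N -> exact_at (d 0%N) e) /\
    (forall i : nat, (i.+1 < n)%N -> exact_at (d i.+1) (d i)).

(* Ext^1_R(F, N) = 0, via Yoneda Ext^1: every extension 0 -> N -> E -> F -> 0
   splits. *)
Definition Ext1_vanishes (F N : lmodType R) : Prop :=
  forall (E : lmodType R) (f : {linear N -> E}) (g : {linear E -> F}),
    short_exact f g -> exists r : {linear E -> N}, forall x : N, r (f x) = x.

Definition FPn_injective (n : nat) (N : lmodType R) : Prop :=
  forall F : lmodType R, FPn n F -> Ext1_vanishes F N.

Definition is_direct_product (I : Type) (M : I -> lmodType R) (P : lmodType R)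
    (p : forall i, {linear P -> M i}) : Prop :=
  (forall y y' : P, (forall i, p i y = p i y') -> y = y') /\
  (forall x : forall i, M i, exists y : P, forall i, p i y = x i).

Definition directed (I : Type) (le : I -> I -> Prop) : Prop :=
  inhabited I /\ (forall i, le i i) /\
  (forall i j k, le i j -> le j k -> le i k) /\
  (forall i j, exists k, le i k /\ le j k).

Definition direct_system (I : Type) (le : I -> I -> Prop) (M : I -> lmodType R)
    (f : forall i j, le i j -> {linear M i -> M j}) : Prop :=
  directed le /\
  (forall i (h : le i i) x, f i i h x = x) /\
  (forall i j k (hij : le i j) (hjk : le j k) (hik : le i k) x,
      f i k hik x = f j k hjk (f i j hij x)).

Definition is_direct_limit (I : Type) (le : I -> I -> Prop) (M : I -> lmodType R)
    (f : forall i j, le i j -> {linear M i -> M j})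
    (L : lmodType R) (u : forall i, {linear M i -> L}) : Prop :=
  (forall i j (h : le i j) x, u j (f i j h x) = u i x) /\
  (forall (X : lmodType R) (g : forall i, {linear M i -> X}),
      (forall i j (h : le i j) x, g j (f i j h x) = g i x) ->
      (exists t : {linear L -> X}, forall i x, t (u i x) = g i x) /\
      (forall t t' : {linear L -> X},
          (forall i x, t (u i x) = g i x) -> (forall i x, t' (u i x) = g i x) ->
          forall y, t y = t' y)).

(* pure short exact sequence: Hom(F, -) preserves exactness for every finitely
   presented F, i.e. every map from a finitely presented module to C lifts
   through g. *)
Definition pure_short_exact (A B C : lmodType R)
    (f : {linear A -> B}) (g : {linear B -> C}) : Prop :=
  short_exact f g /\
  (forall (F : lmodType R), FPn 1 F ->
     forall h : {linear F -> C}, exists h' : {linear F -> B},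
       forall x, g (h' x) = h x).

End ModDefs.

From HB Require Import structures.
From mathcomp Require Import all_boot all_order all_algebra.
From mathcomp Require Import boolp.
Set Implicit Arguments. Unset Strict Implicit. Unset Printing Implicit Defensive.
Import GRing.Theory.
Local Open Scope ring_scope.

(* Present an FP_n module [F] (n >= 2) as [F_2 -d_1-> F_1 -d_0-> F_0 -e-> F -> 0]
   with finitely generated free [F_i].  Then Ext^1(F, N) = 0 iff every map
   [F_1 -> N] vanishing on [ker d_0] extends along [d_0]: one direction splits
   the pushout of the presentation, the other lifts through the free [F_0].  All
   closure properties are checked on this extension condition.  Extensions and
   products are formal; for pure submodules and quotients, purity lifts maps out
   of the finitely presented modules [F] and [F_1 / ker d_0]; for direct limits,
   a map [F_1 -> L] factors through some stage, and since [im d_1] is finitely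
   generated, the factorization kills it at a later stage. *)

Section LinearMaps.
Variable R : pzRingType.
Implicit Types U V W : lmodType R.

Definition linmap U V (f : U -> V) (f_lin : linear f) : {linear U -> V} :=
  HB.pack f (GRing.isLinear.Build R U V *:%R f f_lin).

Lemma linmapE U V (f : U -> V) (f_lin : linear f) x : linmap f_lin x = f x.
Proof. by []. Qed.

Lemma linear_factor_surj U V W (e : {linear U -> V}) (phi : {linear U -> W}) :
  (forall z, exists y, e y = z) -> (forall y, e y = 0 -> phi y = 0) ->
  exists s : {linear V -> W}, forall y, s (e y) = phi y.
Proof.
move=> e_surj phi_ker; have [sec secK] := choice e_surj.
have phi_eq y y' : e y = e y' -> phi y = phi y'.
  by move=> eq_e; apply/eqP; rewrite -subr_eq0 -linearB phi_ker // linearB eq_e subrr.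
have sec_lin : linear (phi \o sec).
  by move=> a z z'; rewrite /= -linearP; apply: phi_eq; rewrite linearP !secK.
by exists (linmap sec_lin) => y; rewrite linmapE /=; apply: phi_eq; rewrite secK.
Qed.

Lemma linear_factor_inj U V W (f : {linear V -> W}) (psi : {linear U -> W}) :
  injective f -> (forall u, exists v, f v = psi u) ->
  exists h : {linear U -> V}, forall u, f (h u) = psi u.
Proof.
move=> f_inj im_psi; have [h hK] := choice im_psi.
have h_lin : linear h by move=> a u v; apply: f_inj; rewrite linearP !hK linearP.
by exists (linmap h_lin).
Qed.

Definition rV_comb k W (b : 'I_k -> W) (x : 'rV[R]_k) : W := \sum_(j < k) x 0 j *: b j.

Lemma rV_comb_is_linear k W (b : 'I_k -> W) : linear (rV_comb b).
Proof.
move=> a x y; rewrite /rV_comb scaler_sumr -big_split; apply: eq_bigr => j _.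
by rewrite !mxE scalerDl scalerA.
Qed.

HB.instance Definition _ k W (b : 'I_k -> W) :=
  GRing.isLinear.Build R 'rV[R]_k W *:%R (rV_comb b) (rV_comb_is_linear b).

Lemma rV_comb_delta k W (b : 'I_k -> W) j : rV_comb b (delta_mx 0 j) = b j.
Proof.
rewrite /rV_comb (bigD1 j) //= big1 ?addr0; first by rewrite mxE !eqxx scale1r.
by move=> i ij; rewrite mxE eqxx /= (negbTE ij) scale0r.
Qed.

Lemma linear_rV_ext k W (t t' : {linear 'rV[R]_k -> W}) :
  (forall j, t (delta_mx 0 j) = t' (delta_mx 0 j)) -> t =1 t'.
Proof.
move=> tt' x; rewrite (row_sum_delta x) !linear_sum; apply: eq_bigr => j _.
by rewrite !linearZ tt'.
Qed.

Lemma rV_lift k V W (g : {linear V -> W}) (t : {linear 'rV[R]_k -> W}) :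
  (forall z, exists y, g y = z) ->
  exists t' : {linear 'rV[R]_k -> V}, forall x, g (t' x) = t x.
Proof.
move=> g_surj; have [sec secK] := choice g_surj.
exists (rV_comb (fun j => sec (t (delta_mx 0 j)))).
by apply: (linear_rV_ext (t := g \o _)) => j /=; rewrite rV_comb_delta secK.
Qed.

End LinearMaps.

Section Quotient.
Variable R : pzRingType.

Record submod (V : lmodType R) := Submod {
  submod_pred :> V -> Prop;
  submod0 : submod_pred 0;
  submodP : forall a x y, submod_pred x -> submod_pred y -> submod_pred (a *: x + y) }.

Variables (V : lmodType R) (S : submod V).

Lemma submodD x y : S x -> S y -> S (x + y).
Proof. by move=> Sx Sy; rewrite -[x]scale1r; apply: submodP. Qed.

Lemma submodZ a x : S x -> S (a *: x).
Proof. by move=> Sx; rewrite -[_ *: x]addr0; apply: submodP => //; apply: submod0. Qed.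

Lemma submodN x : S x -> S (- x).
Proof. by move=> Sx; rewrite -scaleN1r; apply: submodZ. Qed.

(* Cosets are represented by their membership predicates, so that equality
   of cosets is Leibniz equality. *)
Definition quot := {X : V -> Prop | exists v, X = fun w => S (w - v)}.
HB.instance Definition _ := gen_eqMixin quot.
HB.instance Definition _ := gen_choiceMixin quot.

Definition qpi (v : V) : quot := exist _ (fun w => S (w - v)) (ex_intro _ v erefl).
Definition qrepr (X : quot) : V := projT1 (cid (proj2_sig X)).

Lemma qreprK X : qpi (qrepr X) = X.
Proof.
case: X => X hX; rewrite /qrepr /=; case: (cid hX) => v hv /=.
by apply: eq_exist; rewrite hv.
Qed.

Lemma qpi_surj X : exists v, qpi v = X.
Proof. by exists (qrepr X); rewrite qreprK. Qed.

Lemma qpi_eq u v : qpi u = qpi v <-> S (u - v).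
Proof.
split=> [/(congr1 sval) /(congr1 (fun X => X u)) /= | Suv].
  by rewrite subrr => <-; apply: submod0.
apply: eq_exist; apply: funext => w; apply: propext; split=> Sw.
  by have := submodD Sw Suv; rewrite addrA subrK.
by have := submodD Sw (submodN Suv); rewrite opprB addrA subrK.
Qed.

Lemma qrepr_qpi v : S (qrepr (qpi v) - v).
Proof. by apply/qpi_eq; rewrite qreprK. Qed.

Definition qadd X Y := qpi (qrepr X + qrepr Y).
Definition qopp X := qpi (- qrepr X).
Definition qscale a X := qpi (a *: qrepr X).

Lemma qaddE u v : qadd (qpi u) (qpi v) = qpi (u + v).
Proof. by apply/qpi_eq; rewrite opprD addrACA; apply: submodD; apply: qrepr_qpi. Qed.

Lemma qoppE u : qopp (qpi u) = qpi (- u).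
Proof. by apply/qpi_eq; rewrite -opprD; apply/submodN/qrepr_qpi. Qed.

Lemma qscaleE a u : qscale a (qpi u) = qpi (a *: u).
Proof. by apply/qpi_eq; rewrite -scalerBr; apply/submodZ/qrepr_qpi. Qed.

Lemma qaddA : associative qadd.
Proof.
move=> X Y Z; case: (qpi_surj X) (qpi_surj Y) (qpi_surj Z) => x <- [y <-] [z <-].
by rewrite !qaddE addrA.
Qed.

Lemma qaddC : commutative qadd.
Proof.
by move=> X Y; case: (qpi_surj X) (qpi_surj Y) => x <- [y <-]; rewrite !qaddE addrC.
Qed.

Lemma qadd0 : left_id (qpi 0) qadd.
Proof. by move=> X; case: (qpi_surj X) => x <-; rewrite qaddE add0r. Qed.

Lemma qaddN : left_inverse (qpi 0) qopp qadd.
Proof. by move=> X; case: (qpi_surj X) => x <-; rewrite qoppE qaddE addNr. Qed.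

HB.instance Definition _ := GRing.isZmodule.Build quot qaddA qaddC qadd0 qaddN.

Lemma qscaleA a b X : qscale a (qscale b X) = qscale (a * b) X.
Proof. by case: (qpi_surj X) => x <-; rewrite !qscaleE scalerA. Qed.

Lemma qscale1 : left_id 1 qscale.
Proof. by move=> X; case: (qpi_surj X) => x <-; rewrite qscaleE scale1r. Qed.

Lemma qscaleDr : right_distributive qscale qadd.
Proof.
move=> a X Y; case: (qpi_surj X) (qpi_surj Y) => x <- [y <-].
by rewrite qaddE !qscaleE qaddE scalerDr.
Qed.

Lemma qscaleDl X : {morph qscale^~ X : a b / a + b >-> qadd a b}.
Proof. by move=> a b; case: (qpi_surj X) => x <-; rewrite !qscaleE qaddE scalerDl. Qed.

HB.instance Definition _ :=
  GRing.Zmodule_isLmodule.Build R quot qscaleA qscale1 qscaleDr qscaleDl.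

Lemma qpi_is_linear : linear qpi.
Proof. by move=> a u v; rewrite /= -qaddE -qscaleE. Qed.

HB.instance Definition _ := GRing.isLinear.Build R V quot _ qpi qpi_is_linear.

Lemma qpi_eq0 v : qpi v = 0 <-> S v.
Proof. by rewrite -(linear0 qpi) qpi_eq subr0. Qed.

End Quotient.

Section Product.
Variables (R : pzRingType) (I : Type) (M : I -> lmodType R).

Definition prodmod := forall i, M i.
HB.instance Definition _ := gen_eqMixin prodmod.
HB.instance Definition _ := gen_choiceMixin prodmod.

Definition padd (x y : prodmod) : prodmod := fun i => x i + y i.
Definition popp (x : prodmod) : prodmod := fun i => - x i.
Definition pscale a (x : prodmod) : prodmod := fun i => a *: x i.

Lemma paddA : associative padd.
Proof. by move=> x y z; apply: functional_extensionality_dep => i; apply: addrA. Qed.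

Lemma paddC : commutative padd.
Proof. by move=> x y; apply: functional_extensionality_dep => i; apply: addrC. Qed.

Lemma padd0 : left_id (fun i => 0) padd.
Proof. by move=> x; apply: functional_extensionality_dep => i; apply: add0r. Qed.

Lemma paddN : left_inverse (fun i => 0) popp padd.
Proof. by move=> x; apply: functional_extensionality_dep => i; apply: addNr. Qed.

HB.instance Definition _ := GRing.isZmodule.Build prodmod paddA paddC padd0 paddN.

Lemma pscaleA a b x : pscale a (pscale b x) = pscale (a * b) x.
Proof. by apply: functional_extensionality_dep => i; apply: scalerA. Qed.

Lemma pscale1 : left_id 1 pscale.
Proof. by move=> x; apply: functional_extensionality_dep => i; apply: scale1r. Qed.

Lemma pscaleDr : right_distributive pscale padd.
Proof. by move=> a x y; apply: functional_extensionality_dep => i; apply: scalerDr. Qed.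

Lemma pscaleDl x : {morph pscale^~ x : a b / a + b >-> padd a b}.
Proof. by move=> a b; apply: functional_extensionality_dep => i; apply: scalerDl. Qed.

HB.instance Definition _ :=
  GRing.Zmodule_isLmodule.Build R prodmod pscaleA pscale1 pscaleDr pscaleDl.

Lemma prodmodD (x y : prodmod) i : (x + y) i = x i + y i. Proof. by []. Qed.
Lemma prodmodN (x : prodmod) i : (- x) i = - x i. Proof. by []. Qed.
Lemma prodmodZ a (x : prodmod) i : (a *: x) i = a *: x i. Proof. by []. Qed.

End Product.

Section Ext1Presentation.
Variable R : pzRingType.

Definition extends_along k1 k0 (d0 : {linear 'rV[R]_k1 -> 'rV[R]_k0}) (N : lmodType R) :=
  forall h : {linear 'rV[R]_k1 -> N}, (forall x, d0 x = 0 -> h x = 0) ->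
  exists t : {linear 'rV[R]_k0 -> N}, forall x, t (d0 x) = h x.

Variables (k1 k0 : nat) (d0 : {linear 'rV[R]_k1 -> 'rV[R]_k0}).
Variables (F : lmodType R) (e : {linear 'rV[R]_k0 -> F}).
Hypothesis e_surj : forall z, exists y, e y = z.
Hypothesis d0_e_exact : exact_at d0 e.

Lemma e_d0 x : e (d0 x) = 0.
Proof. by apply/d0_e_exact; exists x. Qed.

Lemma Ext1_vanishes_extends (N : lmodType R) : extends_along d0 N -> Ext1_vanishes F N.
Proof.
move=> ext_d0 E f g [f_inj [fg_exact g_surj]].
have gf a : g (f a) = 0 by apply/fg_exact; exists a.
have [phi phiK] := rV_lift e g_surj.
have [h hK] : exists h : {linear 'rV[R]_k1 -> N}, forall x, f (h x) = phi (d0 x).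
  apply: (linear_factor_inj (psi := phi \o d0)) => // x.
  by apply/fg_exact; rewrite /= phiK e_d0.
have [t tK] : exists t : {linear 'rV[R]_k0 -> N}, forall x, t (d0 x) = h x.
  by apply: ext_d0 => x d0x; apply: f_inj; rewrite hK d0x !linear0.
have [s sK] : exists s : {linear F -> E}, forall y, s (e y) = phi y - f (t y).
  by apply: (linear_factor_surj (phi := phi \- (f \o t))) => // y /d0_e_exact [x <-] /=;
    rewrite tK hK subrr.
have gs z : g (s z) = z.
  by have [y <-] := e_surj z; rewrite sK linearB phiK gf subr0.
have [r rK] : exists r : {linear E -> N}, forall y, f (r y) = y - s (g y).
  by apply: (linear_factor_inj (psi := idfun \- (s \o g))) => // y;
    apply/fg_exact; rewrite /= linearB gs subrr.
by exists r => a; apply: f_inj; rewrite rK gf linear0 subr0.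
Qed.

(* [N -> (N * F_0) / {(h x, - d0 x)} -> F] is the pushout of
   [im d0 -> F_0 -> F] along [h]; a retraction of it restricts to an extension of [h]. *)
Lemma extends_Ext1_vanishes (N : lmodType R) : Ext1_vanishes F N -> extends_along d0 N.
Proof.
move=> ext0 h h_ker.
pose P := (N * 'rV[R]_k0)%type.
pose S0 (p : P) := exists x, p = (h x, - d0 x).
have S00 : S0 0 by exists 0; rewrite !linear0.
have S0P a p q : S0 p -> S0 q -> S0 (a *: p + q).
  move=> [x ->] [y ->]; exists (a *: x + y).
  by rewrite [h (_ + _)]linearP [d0 (_ + _)]linearP opprD -scalerN.
pose S := Submod S00 S0P.
have inl_lin : linear (fun a : N => qpi S (a, 0)).
  move=> a u v; rewrite -linearP; congr qpi.
  by apply: injective_projections; rewrite /= ?scaler0 ?addr0.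
have inr_lin : linear (fun y : 'rV[R]_k0 => qpi S (0, y)).
  move=> a u v; rewrite -linearP; congr qpi.
  by apply: injective_projections; rewrite /= ?scaler0 ?addr0.
pose f := linmap inl_lin; pose j := linmap inr_lin.
have snd_lin : linear (fun p : P => e p.2) by move=> a u v; rewrite linearP.
have [g gK] : exists g : {linear quot S -> F}, forall p, g (qpi S p) = e p.2.
  apply: (linear_factor_surj (phi := linmap snd_lin)); first exact: qpi_surj.
  by move=> p /qpi_eq0 [x ->]; rewrite linmapE linearN e_d0 oppr0.
have f_inj : injective f.
  move=> a b /qpi_eq [x [ab d0x]]; apply/eqP; rewrite -subr_eq0 ab h_ker //.
  by apply/eqP; rewrite -oppr_eq0 -d0x subr0.
have fg_exact : exact_at f g.
  move=> X; have [[a y] <-] := qpi_surj X; split=> [|[b <-]]; last first.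
    by rewrite linmapE gK linear0.
  rewrite gK => /d0_e_exact [x d0x]; exists (a + h x); apply/qpi_eq; exists x.
  by rewrite d0x; apply: injective_projections; rewrite /= ?sub0r // addrAC subrr add0r.
have g_surj z : exists X, g X = z by have [y <-] := e_surj z; exists (j y); rewrite gK.
have [r rK] := ext0 _ f g (conj f_inj (conj fg_exact g_surj)).
exists (r \o j) => x /=; rewrite -[RHS]rK; apply: f_equal.
apply/qpi_eq; exists (- x); rewrite !linearN opprK.
by apply: injective_projections; rewrite /= ?sub0r ?subr0.
Qed.

Lemma Ext1_vanishesP (N : lmodType R) : Ext1_vanishes F N <-> extends_along d0 N.
Proof. by split; [apply: extends_Ext1_vanishes | apply: Ext1_vanishes_extends]. Qed.

End Ext1Presentation.

Section Closure.
Variables (R : pzRingType) (k1 k0 : nat) (d0 : {linear 'rV[R]_k1 -> 'rV[R]_k0}).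

Lemma extends_along_ext (A B C : lmodType R) (f : {linear A -> B}) (g : {linear B -> C}) :
  short_exact f g -> extends_along d0 A -> extends_along d0 C -> extends_along d0 B.
Proof.
move=> [f_inj [fg_exact g_surj]] extA extC h h_ker.
have [tC tCK] : exists tC : {linear 'rV[R]_k0 -> C}, forall x, tC (d0 x) = g (h x).
  by apply: (extC (g \o h)) => x /h_ker /= ->; rewrite linear0.
have [t' t'K] := rV_lift tC g_surj.
have [hA hAK] : exists hA : {linear 'rV[R]_k1 -> A}, forall x, f (hA x) = h x - t' (d0 x).
  by apply: (linear_factor_inj (psi := h \- (t' \o d0))) => // x;
    apply/fg_exact; rewrite /= linearB t'K tCK subrr.
have [tA tAK] : exists tA : {linear 'rV[R]_k0 -> A}, forall x, tA (d0 x) = hA x.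
  by apply: extA => x d0x; apply: f_inj; rewrite hAK d0x h_ker // !linear0 addr0.
by exists (t' \+ (f \o tA)) => x /=; rewrite tAK hAK addrC subrK.
Qed.

Lemma extends_along_prod (I : Type) (M : I -> lmodType R) (P : lmodType R)
    (p : forall i, {linear P -> M i}) :
  is_direct_product p -> (forall i, extends_along d0 (M i)) -> extends_along d0 P.
Proof.
move=> [p_inj p_surj] extM h h_ker.
have ext_i i : exists t : {linear 'rV[R]_k0 -> M i}, forall x, t (d0 x) = p i (h x).
  by apply: (extM i (p i \o h)) => x /h_ker /= ->; rewrite linear0.
pose t i := sval (cid (ext_i i)).
have tK i x : t i (d0 x) = p i (h x) := svalP (cid (ext_i i)) x.
have [T TK] := choice (fun y => p_surj (fun i => t i y)).
have T_lin : linear T by move=> a u v; apply: p_inj => i; rewrite !linearP !TK linearP.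
by exists (linmap T_lin) => x; apply: p_inj => i; rewrite linmapE TK tK.
Qed.

Lemma extends_along_pure_sub (F : lmodType R) (e : {linear 'rV[R]_k0 -> F})
    (N M Q : lmodType R) (f : {linear N -> M}) (g : {linear M -> Q}) :
  (forall z, exists y, e y = z) -> exact_at d0 e -> FPn 1 F ->
  pure_short_exact f g -> extends_along d0 M -> extends_along d0 N.
Proof.
move=> e_surj d0_e_exact F1 [[f_inj [fg_exact _]] pure] extM h h_ker.
have [tM tMK] : exists tM : {linear 'rV[R]_k0 -> M}, forall x, tM (d0 x) = f (h x).
  by apply: (extM (f \o h)) => x /h_ker /= ->; rewrite linear0.
have [s sK] : exists s : {linear F -> Q}, forall y, s (e y) = g (tM y).
  apply: (linear_factor_surj (phi := g \o tM)) => // y /d0_e_exact [x <-] /=.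
  by rewrite tMK; apply/fg_exact; exists (h x).
have [s' s'K] := pure F F1 s.
have [t tK] : exists t : {linear 'rV[R]_k0 -> N}, forall y, f (t y) = tM y - s' (e y).
  by apply: (linear_factor_inj (psi := tM \- (s' \o e))) => // y;
    apply/fg_exact; rewrite /= linearB s'K sK subrr.
by exists t => x; apply: f_inj; rewrite tK tMK (e_d0 d0_e_exact) linear0 subr0.
Qed.

End Closure.

(* A map [F_1 -> Q] vanishing on [ker d_0] factors through [cok := F_1 / ker d_0],
   which is finitely presented thanks to [d_1], so purity lifts it to [M]. *)
Lemma extends_along_pure_quot (R : pzRingType) (k : nat -> nat)
    (d : forall i, {linear 'rV[R]_(k i.+1) -> 'rV[R]_(k i)})
    (N M Q : lmodType R) (f : {linear N -> M}) (g : {linear M -> Q}) :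
  exact_at (d 1%N) (d 0%N) ->
  pure_short_exact f g -> extends_along (d 0%N) M -> extends_along (d 0%N) Q.
Proof.
move=> d1_d0_exact [_ pure] extM h h_ker.
pose K0 y := d 0%N y = 0.
have K00 : K0 0 by rewrite /K0 linear0.
have K0P a x y : K0 x -> K0 y -> K0 (a *: x + y).
  by rewrite /K0 linearP => -> ->; rewrite scaler0 addr0.
pose K := Submod K00 K0P.
pose cok := quot K.
have cok_FP1 : FPn 1 cok.
  exists (fun i => k i.+1), (fun i => d i.+1), (qpi K); split; first exact: qpi_surj.
  split=> [_ y | i]; last by rewrite ltnS ltn0.
  by split=> [/qpi_eq0 /d1_d0_exact | /d1_d0_exact /(qpi_eq0 K)].
have [hb hbK] : exists hb : {linear cok -> Q}, forall y, hb (qpi K y) = h y.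
  by apply: linear_factor_surj; [apply: qpi_surj | move=> y /qpi_eq0 /h_ker].
have [hM hMK] := pure _ cok_FP1 hb.
have [tM tMK] : exists tM : {linear 'rV[R]_(k 0%N) -> M},
    forall x, tM (d 0%N x) = hM (qpi K x).
  by apply: (extM (hM \o qpi K)) => x d0x /=; rewrite (iffRL (qpi_eq0 K x) d0x) linear0.
by exists (g \o tM) => x /=; rewrite tMK hMK hbK.
Qed.

Lemma directed_ub_ord (I : Type) (le : I -> I -> Prop) m (idx : 'I_m -> I) :
  directed le -> exists i0, forall j, le (idx j) i0.
Proof.
move=> [[i1] [_ [le_trans le_ub]]].
elim: m idx => [|m IHm] idx; first by exists i1; case.
have [i0 i0_ub] := IHm (idx \o lift ord0).
have [k [idx0_k i0_k]] := le_ub (idx ord0) i0.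
by exists k => j; case: (unliftP ord0 j) => [j' ->|->] //; apply: le_trans (i0_ub j') i0_k.
Qed.

Section DirectLimit.
Variables (R : pzRingType) (I : Type) (le : I -> I -> Prop) (M : I -> lmodType R).
Variables (f : forall i j, le i j -> {linear M i -> M j}).
Variables (L : lmodType R) (u : forall i, {linear M i -> L}).
Hypotheses (f_system : direct_system f) (u_limit : is_direct_limit f u).

Lemma le_trans_system i j k : le i j -> le j k -> le i k.
Proof. by case: f_system => [[_ [_ [le_trans _]]] _]; apply: le_trans. Qed.

Lemma le_ub_system i j : exists k, le i k /\ le j k.
Proof. by case: f_system => [[_ [_ [_ le_ub]]] _]. Qed.

Lemma inhabited_system : inhabited I.
Proof. by case: f_system => [[]]. Qed.

Lemma f_comp i j k (hij : le i j) (hjk : le j k) (hik : le i k) x :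
  f hik x = f hjk (f hij x).
Proof. by case: f_system => _ [_ f_comp]; apply: f_comp. Qed.

Lemma u_compat i j (hij : le i j) x : u j (f hij x) = u i x.
Proof. by case: u_limit. Qed.

(* If [u] missed some element, the projection onto [L / (images of the u i)]
   and the zero map would be two different factorizations of the zero cocone. *)
Lemma dirlim_surj y : exists i x, u i x = y.
Proof.
pose Im y := exists i x, u i x = y.
have Im0 : Im 0 by case: inhabited_system => i; exists i, 0; rewrite linear0.
have ImP a y1 y2 : Im y1 -> Im y2 -> Im (a *: y1 + y2).
  move=> [i [x1 <-]] [j [x2 <-]]; have [k [ik jk]] := le_ub_system i j.
  by exists k, (a *: f ik x1 + f jk x2); rewrite linearP !u_compat.
pose S := Submod Im0 ImP.
have [_ /(_ (quot S) (fun i => \0)) [// | _ u_uniq]] := u_limit.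
have : qpi S y = \0 y.
  by apply: (u_uniq (qpi S) \0) => i x //=; apply/qpi_eq0; exists i, x.
by move/qpi_eq0.
Qed.

Definition germ i (x : M i) : prodmod M :=
  fun j => if pselect (le i j) is left hij then f hij x else 0.

Lemma germE i j (hij : le i j) x : germ x j = f hij x.
Proof. by rewrite /germ; case: pselect => // hij'; rewrite (Prop_irrelevance hij hij'). Qed.

Lemma germ_is_linear i : linear (@germ i).
Proof.
move=> a x y; apply: functional_extensionality_dep => j.
by rewrite prodmodD prodmodZ /germ; case: pselect => hij; rewrite ?linearP // scaler0 addr0.
Qed.

HB.instance Definition _ i :=
  GRing.isLinear.Build R (M i) (prodmod M) *:%R (@germ i) (@germ_is_linear i).

(* The germs of families modulo eventually vanishing ones form a cocone; the
   universal property then forces the germ of [x] to vanish eventually. *)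
Lemma dirlim_eq0 i x : u i x = 0 -> exists j (hij : le i j), f hij x = 0.
Proof.
move=> ux0.
pose Ev (p : prodmod M) := exists k, forall j, le k j -> p j = 0.
have Ev0 : Ev 0 by case: inhabited_system => k; exists k.
have EvP a p q : Ev p -> Ev q -> Ev (a *: p + q).
  move=> [k1 p0] [k2 q0]; have [k [k1k k2k]] := le_ub_system k1 k2.
  exists k => j kj; have [k1j k2j] := (le_trans_system k1k kj, le_trans_system k2k kj).
  by rewrite prodmodD prodmodZ p0 // q0 // scaler0 addr0.
pose Z := Submod Ev0 EvP.
have [_ /(_ (quot Z) (fun i => qpi Z \o @germ i)) [|[t tK] _]] := u_limit.
  move=> i1 j hij y /=; apply/qpi_eq; exists j => l jl.
  have il := le_trans_system hij jl.
  by rewrite prodmodD prodmodN (germE jl) (germE il) (f_comp hij jl il) subrr.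
have /qpi_eq0 [k germ0] : qpi Z (germ x) = 0 by rewrite -[LHS]tK ux0 linear0.
have [j [ij kj]] := le_ub_system i k.
by exists j, ij; rewrite -(germE ij) germ0.
Qed.

Lemma dirlim_rV_factor k (h : {linear 'rV[R]_k -> L}) :
  exists i (hi : {linear 'rV[R]_k -> M i}), forall x, u i (hi x) = h x.
Proof.
have preim l : exists p : {i : I & M i}, u (tag p) (tagged p) = h (delta_mx 0 l).
  by have [i [x ux]] := dirlim_surj (h (delta_mx 0 l)); exists (Tagged M x).
have [p pK] := choice preim.
have [i0 i0_ub] := directed_ub_ord (fun l => tag (p l)) (proj1 f_system).
exists i0, (rV_comb (fun l => f (i0_ub l) (tagged (p l)))).
by apply: (linear_rV_ext (t := u i0 \o _)) => l /=; rewrite rV_comb_delta u_compat pK.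
Qed.

Lemma dirlim_rV_eq0 k i (hi : {linear 'rV[R]_k -> M i}) :
  (forall x, u i (hi x) = 0) -> exists j (hij : le i j), forall x, f hij (hi x) = 0.
Proof.
move=> uhi0.
have vanish l : exists q : {j : I & le i j}, f (tagged q) (hi (delta_mx 0 l)) = 0.
  by have [j [ij fij0]] := dirlim_eq0 (uhi0 (delta_mx 0 l)); exists (Tagged _ ij).
have [q qK] := choice vanish.
have [j1 j1_ub] := directed_ub_ord (fun l => tag (q l)) (proj1 f_system).
have [j [ij j1j]] := le_ub_system i j1.
exists j, ij; apply: (linear_rV_ext (t := f ij \o hi) (t' := \0)) => l /=.
have qj := le_trans_system (j1_ub l) j1j.
by rewrite (f_comp (tagged (q l)) qj ij) qK linear0.
Qed.

Lemma extends_along_dirlim (k : nat -> nat)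
    (d : forall i, {linear 'rV[R]_(k i.+1) -> 'rV[R]_(k i)}) :
  exact_at (d 1%N) (d 0%N) ->
  (forall i, extends_along (d 0%N) (M i)) -> extends_along (d 0%N) L.
Proof.
move=> d1_d0_exact extM h h_ker.
have [i [hi hiK]] := dirlim_rV_factor h.
have [|j [ij fhi0]] := dirlim_rV_eq0 (hi := hi \o d 1%N).
  by move=> z /=; rewrite hiK h_ker //; apply/d1_d0_exact; exists z.
have [tj tjK] : exists tj : {linear 'rV[R]_(k 0%N) -> M j},
    forall x, tj (d 0%N x) = f ij (hi x).
  by apply: (extM j (f ij \o hi)) => x /d1_d0_exact [z <-]; apply: fhi0.
by exists (u j \o tj) => x /=; rewrite tjK u_compat hiK.
Qed.

End DirectLimit.

Lemma FPn_le (R : pzRingType) (m n : nat) (F : lmodType R) :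
  (m <= n)%N -> FPn n F -> FPn m F.
Proof.
move=> mn [k [d [e [e_surj [ex0 exs]]]]]; exists k, d, e; split=> //.
by split=> [m0 | i im]; [apply: ex0 | apply: exs]; apply: leq_trans mn.
Qed.

Section FPnInjective.
Variables (R : pzRingType) (n : nat) (N : lmodType R).

Lemma FPn_injective_extends (F : lmodType R) (k : nat -> nat)
    (d : forall i, {linear 'rV[R]_(k i.+1) -> 'rV[R]_(k i)})
    (e : {linear 'rV[R]_(k 0%N) -> F}) :
  FPn_injective n N -> FPn n F -> (forall z, exists y, e y = z) ->
  exact_at (d 0%N) e -> extends_along (d 0%N) N.
Proof. by move=> injN hF e_surj d0_e; apply/(Ext1_vanishesP e_surj d0_e)/injN. Qed.

Lemma FPn_injective_of_extends : (1 < n)%N ->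
  (forall (F : lmodType R) (k : nat -> nat)
       (d : forall i, {linear 'rV[R]_(k i.+1) -> 'rV[R]_(k i)})
       (e : {linear 'rV[R]_(k 0%N) -> F}),
     FPn n F -> (forall z, exists y, e y = z) -> exact_at (d 0%N) e ->
     exact_at (d 1%N) (d 0%N) -> extends_along (d 0%N) N) ->
  FPn_injective n N.
Proof.
move=> hn extN F hF; have [k [d [e [e_surj [d0_e exs]]]]] := hF.
have d0_e_exact := d0_e (ltnW hn).
apply/(Ext1_vanishesP e_surj d0_e_exact)/extN => //; [exact: hF | exact: exs 0%N hn].
Qed.

End FPnInjective.

Theorem proposition3p10 (R : pzRingType) (n : nat) (hn : (1 < n)%N) :
  (* closed under extensions *)
  (forall (A B C : lmodType R) (f : {linear A -> B}) (g : {linear B -> C}),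
      short_exact f g -> FPn_injective n A -> FPn_injective n C ->
      FPn_injective n B) /\
  (* closed under direct products *)
  (forall (I : Type) (M : I -> lmodType R) (P : lmodType R)
          (p : forall i, {linear P -> M i}),
      is_direct_product p -> (forall i, FPn_injective n (M i)) ->
      FPn_injective n P) /\
  (* closed under direct limits *)
  (forall (I : Type) (le : I -> I -> Prop) (M : I -> lmodType R)
          (f : forall i j, le i j -> {linear M i -> M j})
          (L : lmodType R) (u : forall i, {linear M i -> L}),
      direct_system f -> is_direct_limit f u ->
      (forall i, FPn_injective n (M i)) -> FPn_injective n L) /\
  (* closed under pure submodules and pure quotients *)
  (forall (N M Q : lmodType R) (f : {linear N -> M}) (g : {linear M -> Q}),
      pure_short_exact f g -> FPn_injective n M ->
      FPn_injective n N /\ FPn_injective n Q).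
Proof.
split; [|split; [|split]].
- move=> A B C f g fg injA injC.
  apply: (FPn_injective_of_extends hn) => F k d e hF e_surj d0_e _.
  exact: extends_along_ext fg (FPn_injective_extends injA hF e_surj d0_e)
    (FPn_injective_extends injC hF e_surj d0_e).
- move=> I M P p prodP injM.
  apply: (FPn_injective_of_extends hn) => F k d e hF e_surj d0_e _.
  apply: (extends_along_prod prodP) => i.
  exact: FPn_injective_extends (injM i) hF e_surj d0_e.
- move=> I le M f L u sys lim injM.
  apply: (FPn_injective_of_extends hn) => F k d e hF e_surj d0_e d1_d0.
  apply: (extends_along_dirlim sys lim d1_d0) => i.
  exact: FPn_injective_extends (injM i) hF e_surj d0_e.
move=> N M Q f g pure injM.
split; apply: (FPn_injective_of_extends hn) => F k d e hF e_surj d0_e d1_d0.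
  apply: (extends_along_pure_sub e_surj d0_e (FPn_le (ltnW hn) hF) pure).
  exact: FPn_injective_extends injM hF e_surj d0_e.
apply: (extends_along_pure_quot d1_d0 pure).
exact: FPn_injective_extends injM hF e_surj d0_e.
Qed.
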